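(* For any Tychonoff space $X$, the following conditions are equivalent: (i) the free topological group $F_G(X)$ is an $F'$-space; (ii) the free Abelian topological group $A_G(X)$ is an $F'$-space; (iii) $X$ is a $P$-space.
   Context: A space is an $F'$-space if any two disjoint cozero sets in it have disjoint closures; it is a $P$-space if every $G_\delta$-set is open. For a Tychonoff space $X$ with a fixed point $x_0$, the (Graev) free topological group $F_G(X)$ is the unique topological group with identity $x_0$ containing $X$ as a subspace such that every continuous map from $X$ to a topological group sending $x_0$ to the identity extends to a continuous homomorphism $F_G(X)\to G$; it does not depend on the choice of $x_0$ up to topological isomorphism. The (Graev) free Abelian topological group $A_G(X)$ is defined analogously with Abelian groups in place of groups. *)

From HB Require Import structures.
From mathcomp Require Import all_boot all_order all_algebra.
From mathcomp Require Import all_classical all_reals topology.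
From mathcomp Require Import Rstruct Rstruct_topology.
From Stdlib Require Import Rdefinitions.
Set Implicit Arguments. Unset Strict Implicit. Unset Printing Implicit Defensive.
Import Order.TTheory GRing.Theory Num.Theory.
Local Open Scope classical_set_scope.

Definition cozero (T : topologicalType) (f : T -> R) : set T :=
  [set x | f x <> 0%R].

Definition tychonoff_space (T : topologicalType) : Prop :=
  accessible_space T /\
  forall (B : set T) (a : T), closed B -> ~ B a ->
    exists f : T -> R, continuous f /\ f a = 0%R /\ (forall b, B b -> f b = 1%R).

Definition F'_space (T : topologicalType) : Prop :=
  forall f g : T -> R, continuous f -> continuous g ->
    cozero f `&` cozero g = set0 ->
    closure (cozero f) `&` closure (cozero g) = set0.

Definition P_space (T : topologicalType) : Prop :=
  forall U : nat -> set T, (forall n, open (U n)) -> open (\bigcap_n U n).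

Definition is_topgroup (G : topologicalType)
  (mul : G -> G -> G) (inv : G -> G) (one : G) : Prop :=
  (forall x y z, mul x (mul y z) = mul (mul x y) z) /\
  (forall x, mul one x = x) /\ (forall x, mul x one = x) /\
  (forall x, mul (inv x) x = one) /\ (forall x, mul x (inv x) = one) /\
  continuous (fun p : G * G => mul p.1 p.2) /\ continuous inv.

Definition is_abelian_topgroup (G : topologicalType)
  (mul : G -> G -> G) (inv : G -> G) (one : G) : Prop :=
  is_topgroup mul inv one /\ (forall x y, mul x y = mul y x).

Definition is_hom (G H : Type) (mulG : G -> G -> G) (mulH : H -> H -> H)
  (phi : G -> H) : Prop := forall x y, phi (mulG x y) = mulH (phi x) (phi y).

Definition is_subgroup (G : Type) (mul : G -> G -> G) (inv : G -> G) (one : G)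
  (S : set G) : Prop :=
  [/\ S one, (forall x y, S x -> S y -> S (mul x y)) & (forall x, S x -> S (inv x))].

Definition embedding (X G : topologicalType) (j : X -> G) : Prop :=
  [/\ injective j, continuous j &
      forall U : set X, open U -> exists V : set G, open V /\ U = j @^-1` V].

Definition graev_free_topgroup (X : topologicalType) (x0 : X)
  (G : topologicalType) (mul : G -> G -> G) (inv : G -> G) (one : G)
  (j : X -> G) : Prop :=
  [/\ is_topgroup mul inv one, embedding j, j x0 = one,
      (forall S, is_subgroup mul inv one S -> range j `<=` S -> S = setT) &
      forall (H : topologicalType) (mulH : H -> H -> H) (invH : H -> H) (oneH : H),
        is_topgroup mulH invH oneH ->
        forall f : X -> H, continuous f -> f x0 = oneH ->
        exists phi : G -> H, [/\ continuous phi, is_hom mul mulH phi &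
                                 forall x, phi (j x) = f x]].

Definition graev_free_abelian_topgroup (X : topologicalType) (x0 : X)
  (A : topologicalType) (mul : A -> A -> A) (inv : A -> A) (one : A)
  (j : X -> A) : Prop :=
  [/\ is_abelian_topgroup mul inv one, embedding j, j x0 = one,
      (forall S, is_subgroup mul inv one S -> range j `<=` S -> S = setT) &
      forall (H : topologicalType) (mulH : H -> H -> H) (invH : H -> H) (oneH : H),
        is_abelian_topgroup mulH invH oneH ->
        forall f : X -> H, continuous f -> f x0 = oneH ->
        exists phi : A -> H, [/\ continuous phi, is_hom mul mulH phi &
                                 forall x, phi (j x) = f x]].

(* If X is a P-space, so is every free (Abelian) topological group G over X:
   the G_delta-modification of G is again a topological group, X embeds in it
   continuously because X is a P-space, and the homomorphic extension of this
   embedding is the identity of G, which is therefore continuous from G to its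
   G_delta-modification.  In a P-space zero sets are open, so cozero sets are
   clopen and G is an F'-space.
   Conversely, let G be an F'-space and let h vanish at z.  Extend
   y |-> h(y)^2 - h(x0)^2 to a continuous homomorphism phi : G -> R.  The maps
   y |-> j(y) j(z)^-1 and y |-> j(z) j(y)^-1 send the points near z where h
   does not vanish to points near the identity where phi > 0, resp. phi < 0;
   as {phi > 0} and {phi < 0} are disjoint cozero sets, the zero set of h is
   a neighbourhood of z.  In a Tychonoff space every G_delta containing z
   contains a zero set containing z, hence X is a P-space. *)

From HB Require Import structures.
From mathcomp Require Import all_boot all_order all_algebra.
From mathcomp Require Import all_classical all_reals.
From mathcomp Require Import topology normedtype sequences.
From mathcomp Require Import Rstruct Rstruct_topology.
From Stdlib Require Import Rdefinitions.
From mathcomp Require Import interval_inference ring lra.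
Set Implicit Arguments. Unset Strict Implicit. Unset Printing Implicit Defensive.
Import Order.TTheory GRing.Theory Num.Theory.
Local Open Scope classical_set_scope.
Local Open Scope ring_scope.

Section GdeltaModification.
Variable T : topologicalType.

Definition gdelta : Type := T.
HB.instance Definition _ := Choice.on gdelta.

Definition to_gdelta (x : T) : gdelta := x.
Definition of_gdelta (x : gdelta) : T := x.

Definition gdelta_open (W : set gdelta) : Prop :=
  forall x, W x -> exists V : nat -> set T,
    [/\ forall n, open (V n), forall n, V n x & \bigcap_n V n `<=` W].

Lemma gdelta_openT : gdelta_open setT.
Proof. by move=> x _; exists (fun=> setT); split => // n; exact: openT. Qed.

Lemma gdelta_openI : setI_closed gdelta_open.
Proof.
move=> A B oA oB x [/oA [V [oV Vx VA]] /oB [W [oW Wx WB]]].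
exists (fun n => V n `&` W n); split => [n|n|y VWy]; first exact: openI.
  by split.
by split; [apply: VA => n _; case: (VWy n I)|apply: WB => n _; case: (VWy n I)].
Qed.

Lemma gdelta_open_bigU (I : Type) (W : I -> set gdelta) :
  (forall i, gdelta_open (W i)) -> gdelta_open (\bigcup_i W i).
Proof.
move=> oW x [i _ /oW [V [oV Vx VW]]].
by exists V; split => // y /VW; exists i.
Qed.

HB.instance Definition _ :=
  isOpenTopological.Build gdelta gdelta_openT gdelta_openI gdelta_open_bigU.

Lemma gdelta_nbhs_bigcap (V : nat -> set T) (x : T) :
  (forall n, nbhs x (V n)) -> nbhs (to_gdelta x) (\bigcap_n V n : set gdelta).
Proof.
move=> Vx; have /choice [O HO] n : exists O, [/\ open O, O x & O `<=` V n].
  by have := Vx n; rewrite nbhsE => -[O [oO Ox] OV]; exists O.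
exists (\bigcap_n O n); split => [y Oy|n _|y Oy n _].
- by exists O; split => // n; [case: (HO n)|exact: Oy].
- by case: (HO n).
- by case: (HO n) => _ _; apply; exact: Oy.
Qed.

Lemma P_space_gdeltaP : P_space T <-> continuous to_gdelta.
Proof.
split => [PT x W [B [oB Bx BW]]|cT U oU].
  have [V [oV Vx VB]] := oB x Bx.
  rewrite nbhsE; exists (\bigcap_n V n) => [|y /VB /BW //].
  by split; [exact: PT|move=> n _].
have oU' : open (\bigcap_n U n : set gdelta).
  by move=> x Ux; exists U; split => // n; exact: Ux.
exact: (continuousP _).1 cT _ oU'.
Qed.

End GdeltaModification.

Lemma continuous_gdelta_map (S T : topologicalType) (f : S -> T) :
  continuous f -> continuous (fun x : gdelta S => to_gdelta (f x)).
Proof.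
move=> cf x W [B [oB Bfx BW]]; have [V [oV Vfx VB]] := oB _ Bfx.
have /gdelta_nbhs_bigcap [O [oO Ox OV]] n : nbhs (of_gdelta x) (f @^-1` V n).
  by apply: cf; exact: open_nbhs_nbhs.
by exists O; split => // y /OV Vy; apply/BW/VB => n _; exact: Vy.
Qed.

Lemma continuous_gdelta_pair (S T : topologicalType) :
  continuous (fun p : gdelta S * gdelta T =>
    to_gdelta ((of_gdelta p.1, of_gdelta p.2) : S * T)).
Proof.
case=> x y W [B [oB Bxy BW]]; have [V [oV Vxy VB]] := oB _ Bxy.
have /choice [A HA] n : exists A : set S * set T,
    [/\ nbhs (of_gdelta x) A.1, nbhs (of_gdelta y) A.2 & A.1 `*` A.2 `<=` V n].
  have [[A1 A2] /= [A1x A2y] A12V] := open_nbhs_nbhs (conj (oV n) (Vxy n)).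
  by exists (A1, A2).
exists (\bigcap_n (A n).1, \bigcap_n (A n).2).
  by split; apply: gdelta_nbhs_bigcap => n; case: (HA n).
case=> a b /= [Aa Ab]; apply/BW/VB => n _.
by case: (HA n) => _ _; apply; split; [exact: Aa|exact: Ab].
Qed.

Lemma P_space_continuous_gdelta (S T : topologicalType) (f : S -> T) :
  P_space S -> continuous f -> continuous (fun x => to_gdelta (f x)).
Proof.
move=> /P_space_gdeltaP cS cf x.
exact: (continuous_comp (cS x) (continuous_gdelta_map cf (x := to_gdelta x))).
Qed.

Lemma gdelta_topgroup (G : topologicalType) mul inv (one : G) :
  is_topgroup mul inv one -> is_topgroup (G := gdelta G) mul inv one.
Proof.
case=> ? [? [? [? [? [cmul cinv]]]]].
do 5 (split => //); split; last exact: continuous_gdelta_map cinv.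
move=> p; exact: (continuous_comp (continuous_gdelta_pair (x := p))
                                  (continuous_gdelta_map cmul (x := _))).
Qed.

Lemma gdelta_abelian_topgroup (G : topologicalType) mul inv (one : G) :
  is_abelian_topgroup mul inv one ->
  is_abelian_topgroup (G := gdelta G) mul inv one.
Proof. by case=> /gdelta_topgroup. Qed.

Definition is_group (G : Type) (mul : G -> G -> G) (inv : G -> G) (one : G) :=
  [/\ associative mul, left_id one mul, right_id one mul,
      left_inverse one inv mul & right_inverse one inv mul].

Lemma topgroup_group (G : topologicalType) mul inv (one : G) :
  is_topgroup mul inv one -> is_group mul inv one.
Proof. by case=> ? [? [? [? [? _]]]]. Qed.

Section GroupHom.
Variables (G H : Type) (mulG : G -> G -> G) (invG : G -> G) (oneG : G).
Variables (mulH : H -> H -> H) (invH : H -> H) (oneH : H) (phi : G -> H).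
Hypothesis groupG : is_group mulG invG oneG.
Hypothesis groupH : is_group mulH invH oneH.
Hypothesis phiM : is_hom mulG mulH phi.

Lemma hom1 : phi oneG = oneH.
Proof.
case: groupG groupH => _ mul1g _ _ _ [mulA mul1 _ mulV _].
have idem : mulH (phi oneG) (phi oneG) = phi oneG by rewrite -phiM mul1g.
by rewrite -[LHS]mul1 -(mulV (phi oneG)) -mulA idem.
Qed.

Lemma homV g : phi (invG g) = invH (phi g).
Proof.
case: groupG groupH => _ _ _ mulVg _ [mulA mul1 mul1' _ mulV'].
by rewrite -[LHS]mul1' -(mulV' (phi g)) mulA -phiM mulVg hom1 mul1.
Qed.

End GroupHom.

Lemma hom_id_of_generators (X G : Type) mul inv (one : G) (j : X -> G)
    (phi : G -> G) :
  is_group mul inv one ->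
  (forall S, is_subgroup mul inv one S -> range j `<=` S -> S = setT) ->
  is_hom mul mul phi -> (forall x, phi (j x) = j x) -> forall g, phi g = g.
Proof.
move=> groupG generated phiM phij g.
suff /seteqP [_ /(_ g I)//] : [set g | phi g = g] = setT.
apply: generated => [|_ [x _ <-]]; last exact: phij.
split => [|a b /= pa pb|a /= pa]; first exact: (hom1 groupG groupG phiM).
  by rewrite phiM pa pb.
by rewrite (homV groupG groupG phiM) pa.
Qed.

Lemma R_abelian_topgroup :
  is_abelian_topgroup (fun a b : R => a + b) (fun a => - a) 0.
Proof.
split; last exact: addrC.
do 5 (split; first by move=> *; rewrite ?addrA ?add0r ?addr0 ?addNr ?addrN).
split; [exact: (@add_continuous R^o)|exact: (@opp_continuous R^o)].
Qed.

Lemma P_space_zero_set_open (T : topologicalType) (f : T -> R) :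
  P_space T -> continuous f -> open [set x | f x = 0].
Proof.
move=> PT cf.
have -> : [set x | f x = 0] = \bigcap_n f @^-1` ball (0 : R) n.+1%:R^-1.
  apply/seteqP; split => [x /= fx0 n _|x fx_small /=].
    by rewrite /= fx0; apply: ballxx; rewrite invr_gt0.
  apply/eqP/negPn/negP; rewrite -normr_gt0 => /ltr_add_invr [k].
  rewrite add0r => big; have := fx_small k I; rewrite /ball /= sub0r normrN.
  by move=> /(lt_trans big); rewrite ltxx.
by apply: PT => n; move/continuousP: cf; apply; exact: (@ball_open _ R^o).
Qed.

Lemma P_space_F' (T : topologicalType) : P_space T -> F'_space T.
Proof.
move=> PT f g cf cg fg.
have closed_cozero (h : T -> R) : continuous h -> closure (cozero h) = cozero h.
  move=> ch; apply/esym/closure_id.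
  have -> : cozero h = ~` [set x | h x = 0] by [].
  exact/open_closedC/(P_space_zero_set_open PT ch).
by rewrite !closed_cozero.
Qed.

Lemma F'_closure_pos_neg (T : topologicalType) (f : T -> R) :
  F'_space T -> continuous f ->
  closure [set x | 0 < f x] `&` closure [set x | f x < 0] = set0.
Proof.
move=> F' cf.
have posE : cozero (f \max cst 0) = [set x | 0 < f x].
  apply/funext => x; apply/propext; rewrite /cozero /=.
  case: (ltrP 0 (f x)) => fx; last by split => // /(_ erefl).
  by split => // _; apply/eqP; rewrite gt_eqF.
have negE : cozero (f \min cst 0) = [set x | f x < 0].
  apply/funext => x; apply/propext; rewrite /cozero /=.
  case: (ltrP (f x) 0) => fx; last by split => // /(_ erefl).
  by split => // _; apply/eqP; rewrite lt_eqF.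
rewrite -posE -negE; apply: F'.
- by move=> x; apply: continuous_max; [exact: cf|exact: cst_continuous].
- by move=> x; apply: continuous_min; [exact: cf|exact: cst_continuous].
rewrite posE negE; apply/seteqP; split => // x [/= xpos xneg].
by have := lt_trans xpos xneg; rewrite ltxx.
Qed.

Lemma closure_continuous_at (S T : topologicalType) (t : S -> T)
    (A : set S) (B : set T) (z : S) :
  {for z, continuous t} -> (forall y, A y -> B (t y)) ->
  closure A z -> closure B (t z).
Proof.
move=> ct AB clA W /ct tW; have [y [Ay Wty]] := clA _ tW.
by exists (t y); split => //; exact: AB.
Qed.

Lemma F'_topgroup_not_closure_gt (X G : topologicalType) mul inv (one : G)
    (j : X -> G) (phi : G -> R) (f : X -> R) :
  is_topgroup mul inv one -> continuous j -> continuous phi ->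
  is_hom mul (fun a b => a + b) phi -> (forall x, phi (j x) = f x) ->
  F'_space G -> forall z, ~ closure [set y | f z < f y] z.
Proof.
move=> tg cj cphi phiM phij F' z clz.
have [_ [_ [_ [_ [mulgV [cmul cinv]]]]]] := tg.
have phiV g : phi (inv g) = - phi g.
  exact: homV (topgroup_group tg) (topgroup_group R_abelian_topgroup.1) phiM g.
have cdiv (a b : X -> G) : continuous a -> continuous b ->
    continuous (fun y => mul (a y) (inv (b y))).
  move=> ca cb y.
  apply: (@continuous_comp _ _ _ (fun y => (a y, inv (b y)))
                                  (fun p : G * G => mul p.1 p.2)).
    by apply: cvg_pair; [exact: ca|exact: continuous_comp (cb y) (cinv _)].
  exact: cmul.
have /seteqP [/(_ one) + _] := F'_closure_pos_neg F' cphi; apply; split.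
- rewrite -(mulgV (j z)).
  apply: (closure_continuous_at (t := fun y => mul (j y) (inv (j z)))) clz.
    by apply: cdiv => //; exact: cst_continuous.
  by move=> y /=; rewrite phiM phiV !phij subr_gt0.
- rewrite -(mulgV (j z)).
  apply: (closure_continuous_at (t := fun y => mul (j z) (inv (j y)))) clz.
    by apply: cdiv => //; exact: cst_continuous.
  by move=> y /=; rewrite phiM phiV !phij subr_lt0.
Qed.

Lemma free_F'_zero_set_open (X G : topologicalType) (x0 : X) mul inv (one : G)
    (j : X -> G) :
  is_topgroup mul inv one -> continuous j ->
  (forall f : X -> R, continuous f -> f x0 = 0 ->
     exists phi : G -> R, [/\ continuous phi, is_hom mul (fun a b => a + b) phi
                              & forall x, phi (j x) = f x]) ->
  F'_space G ->
  forall h : X -> R, continuous h ->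
  forall z, h z = 0 -> nbhs z [set y | h y = 0].
Proof.
move=> tg cj extend F' h ch z hz.
pose f y := h y * h y - h x0 * h x0.
have cf : continuous f.
  move=> y; apply: (@continuousB R R^o _ (fun y => h y * h y) (cst _)).
    by apply: (@continuousM R _ h h); exact: ch.
  exact: cst_continuous.
have [phi [cphi phiM phij]] := extend f cf (subrr _).
have : (~` [set y | f z < f y])° z.
  rewrite interiorC.
  exact: F'_topgroup_not_closure_gt tg cj cphi phiM phij F' z.
apply: filterS => y; apply: contra_notP => /eqP hy.
by rewrite /f /= hz mul0r ltrD2r -expr2 exprn_even_gt0.
Qed.

Lemma continuous_uniform_approx (T : topologicalType) (h : T -> R) :
  (forall e : R, 0 < e ->
     exists g : T -> R, continuous g /\ forall y, `|h y - g y| < e) ->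
  continuous h.
Proof.
move=> approx x; apply/(@cvgrPdist_lt _ R^o) => e e0.
have e3 : 0 < e / 3 by rewrite divr_gt0.
have [g [cg hg]] := approx _ e3.
have /(@cvgrPdist_lt _ R^o) /(_ _ e3) := cg x.
apply: filterS => y gxy; move: (hg x) (hg y) gxy; rewrite !ltr_norml.
by move=> /andP[? ?] /andP[? ?] /andP[? ?]; apply/andP; split; lra.
Qed.

Section CountableIntersectionOfZeroSets.
Variables (T : topologicalType) (c : nat -> T -> R).
Hypothesis c_cont : forall n, continuous (c n).
Hypothesis c01 : forall n y, 0 <= c n y <= 1.

Let r : R := 2^-1.
Let r_ge0 k : 0 <= r ^+ k. Proof. by rewrite exprn_ge0 // invr_ge0. Qed.
Let S N y := \sum_(n < N) c n y * r ^+ n.+1.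
Let h y := sup (range (S ^~ y)).

Let S_recr N y : S N.+1 y = S N y + c N y * r ^+ N.+1.
Proof. by rewrite /S big_ord_recr. Qed.

Let S_nondecreasing y : nondecreasing_seq (S ^~ y).
Proof.
apply/nondecreasing_seqP => N; rewrite S_recr lerDl.
by rewrite mulr_ge0 //; case/andP: (c01 N y).
Qed.

Let S_tail_nonincreasing y : nonincreasing_seq (fun N => S N y + r ^+ N).
Proof.
apply/nonincreasing_seqP => N; rewrite S_recr.
have rS : r ^+ N = r ^+ N.+1 + r ^+ N.+1 by rewrite exprS /r; field.
have : c N y * r ^+ N.+1 <= r ^+ N.+1.
  by rewrite ler_piMl //; case/andP: (c01 N y).
lra.
Qed.

Let S_le N M y : S M y <= S N y + r ^+ N.
Proof.
case: (leqP M N) => [MN|/ltnW NM].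
  by rewrite (le_trans (S_nondecreasing y MN)) // lerDl.
by rewrite (le_trans _ (S_tail_nonincreasing y NM)) // lerDl.
Qed.

Let h_bounds N y : S N y <= h y <= S N y + r ^+ N.
Proof.
have ne : range (S ^~ y) !=set0 by exists (S 0 y), 0%N.
apply/andP; split; last by apply: ge_sup => // _ [M _ <-]; exact: S_le.
apply: sup_upper_bound; last by exists N.
by split => //; exists (S 0 y + r ^+ 0) => _ [M _ <-]; exact: S_le.
Qed.

Let h_cont : continuous h.
Proof.
apply: continuous_uniform_approx => e e0.
have [N _ /(_ N (leqnn N))] := near_infty_natSinv_expn_lt (PosNum e0).
rewrite div1r -exprVn -/r => rN.
exists (S N); split.
  apply: (@continuous_big R^o _ +%R 0 xpredT (@add_continuous R^o)) => n _ x.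
  apply: (@continuousM R T (c n) (cst _)); first exact: c_cont.
  exact: cst_continuous.
move=> y; have /andP[lo hi] := h_bounds N y.
by rewrite ger0_norm ?subr_ge0 // ltrBlDl (le_lt_trans hi) // ltrD2l.
Qed.

Let h_eq0 y : h y = 0 <-> forall n, c n y = 0.
Proof.
have S0 : S 0 y = 0 by rewrite /S big_ord0.
split => [hy0 n|c0].
  have S_ge0 : 0 <= S n y by rewrite -S0; exact: S_nondecreasing.
  have : S n.+1 y <= 0 by rewrite -hy0; case/andP: (h_bounds n.+1 y).
  rewrite S_recr => Sn1_le0.
  have : c n y * r ^+ n.+1 <= 0 by lra.
  rewrite pmulr_lle0 ?exprn_gt0 ?invr_gt0 // => cn_le0.
  by apply/le_anti; rewrite cn_le0; case/andP: (c01 n y).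
have SN0 N : S N y = 0 by rewrite /S big1 // => n _; rewrite c0 mul0r.
apply/le_anti/andP; split; last by rewrite -S0; case/andP: (h_bounds 0 y).
by apply: ge_sup => [|_ [M _ <-]]; [exists (S 0 y), 0%N|rewrite SN0].
Qed.

Lemma zero_set_bigcap :
  exists h : T -> R, continuous h /\ forall y, h y = 0 <-> forall n, c n y = 0.
Proof. by exists h; split; [exact: h_cont|exact: h_eq0]. Qed.

End CountableIntersectionOfZeroSets.

Lemma tychonoff_cutoff (X : topologicalType) (U : set X) (z : X) :
  tychonoff_space X -> open U -> U z ->
  exists c : X -> R, [/\ continuous c, c z = 0,
    forall y, 0 <= c y <= 1 & forall y, ~ U y -> c y = 1].
Proof.
move=> [_ separate] oU Uz.
have [f [cf [fz f1]]] :=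
  separate (~` U) z (open_closedC oU) (fun nUz => nUz Uz).
exists ((fun y => f y * f y) \min cst 1); split => [x||y|y nUy].
- apply: continuous_min; last exact: cst_continuous.
  by apply: (@continuousM R X f f); exact: cf.
- by rewrite /= fz mulr0 /cst min_l.
- rewrite /= ge_min le_min lexx orbT andbT /cst ler01 andbT.
  by rewrite -expr2 sqr_ge0.
- by rewrite /= f1 // mulr1 /cst minxx.
Qed.

Lemma tychonoff_zero_sets_open_P_space (X : topologicalType) :
  tychonoff_space X ->
  (forall h : X -> R, continuous h -> forall z, h z = 0 ->
     nbhs z [set y | h y = 0]) ->
  P_space X.
Proof.
move=> tych zero_open U oU; rewrite openE => z Uz.
have /choice [c /all_and4 [c_cont cz c01 c1]] n :=
  tychonoff_cutoff tych (oU n) (Uz n I).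
have [h [ch h0]] := zero_set_bigcap c_cont c01.
have := zero_open h ch z ((h0 z).2 cz).
apply: filterS => y /h0 cy0 n _; apply: contrapT => /(c1 n y).
by rewrite cy0 => /eqP; rewrite eq_sym oner_eq0.
Qed.

Lemma free_topgroup_P_space (X G : topologicalType) mul inv (one : G)
    (j : X -> G) :
  is_topgroup mul inv one ->
  (forall S, is_subgroup mul inv one S -> range j `<=` S -> S = setT) ->
  (exists phi : G -> gdelta G, [/\ continuous phi, is_hom mul mul phi
                                   & forall x, phi (j x) = to_gdelta (j x)]) ->
  P_space G.
Proof.
move=> tg generated [phi [cphi phiM phij]].
have phi_id := hom_id_of_generators (topgroup_group tg) generated phiM phij.
apply/P_space_gdeltaP; suff -> : @to_gdelta G = phi by [].
by apply/funext => g; rewrite phi_id.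
Qed.

Lemma free_topgroup_F'_P (X G : topologicalType) (x0 : X) mul inv (one : G)
    (j : X -> G) :
  tychonoff_space X -> is_topgroup mul inv one -> continuous j -> j x0 = one ->
  (forall S, is_subgroup mul inv one S -> range j `<=` S -> S = setT) ->
  (forall f : X -> R, continuous f -> f x0 = 0 ->
     exists phi : G -> R, [/\ continuous phi, is_hom mul (fun a b => a + b) phi
                              & forall x, phi (j x) = f x]) ->
  (forall f : X -> gdelta G, continuous f -> f x0 = one ->
     exists phi : G -> gdelta G, [/\ continuous phi, is_hom mul mul phi
                                     & forall x, phi (j x) = f x]) ->
  F'_space G <-> P_space X.
Proof.
move=> tych tg cj jx0 generated extend_R extend_gdelta; split => [F'|PX].
  apply: tychonoff_zero_sets_open_P_space tych _.
  exact: free_F'_zero_set_open tg cj extend_R F'.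
apply/P_space_F'/(free_topgroup_P_space tg generated)/extend_gdelta => //.
exact: P_space_continuous_gdelta.
Qed.

Theorem theorem4 (X : topologicalType) (x0 : X) :
  tychonoff_space X ->
  forall (G : topologicalType) (mulG : G -> G -> G) (invG : G -> G) (oneG : G)
         (jG : X -> G),
  graev_free_topgroup x0 mulG invG oneG jG ->
  forall (A : topologicalType) (mulA : A -> A -> A) (invA : A -> A) (oneA : A)
         (jA : X -> A),
  graev_free_abelian_topgroup x0 mulA invA oneA jA ->
  (F'_space G <-> P_space X) /\ (F'_space A <-> P_space X).
Proof.
move=> tych G mulG invG oneG jG [tgG [_ cjG _] jx0G genG extG]
  A mulA invA oneA jA [tgA [_ cjA _] jx0A genA extA].
split.
  apply: (free_topgroup_F'_P tych tgG cjG jx0G genG).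
    exact: extG _ _ _ _ R_abelian_topgroup.1.
  exact: extG _ _ _ _ (gdelta_topgroup tgG).
apply: (free_topgroup_F'_P tych tgA.1 cjA jx0A genA).
  exact: extA _ _ _ _ R_abelian_topgroup.
exact: extA _ _ _ _ (gdelta_abelian_topgroup tgA).
Qed.
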